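(* Let $\vec E$ be as in the context, fix $b\in\Lambda^*$, and for $J_\Lambda,J'_\Lambda\in\mathbb{R}^{\Lambda^*}$ consider the curve $J_\Lambda(s)=e^{-s}J_\Lambda+\sqrt{1-e^{-2s}}J'_\Lambda$, $s\ge0$. For almost all $(J_\Lambda,J'_\Lambda)$ with respect to the product of standard Gaussian measures, the following implication holds for every $t\ge0$: if $F_b(s)>0$ for all $0\le s\le t$, then $\sigma_b(s)=\sigma_b(0)$ for all $0\le s\le t$.
   Context: $\Lambda\subset\mathbb{Z}^d$ is a finite box, $\Lambda^*$ its set of nearest-neighbour edges. For spins $\eta$ and $e=\{x,y\}$, $\eta_e=\eta_x\eta_y$; $\mathcal S_\Lambda\subset\{-1,1\}^{\Lambda^*}$ is the set of edge configurations induced by spin configurations on $\Lambda$. $H_{\Lambda,J}(\eta)=-\sum_{e\in\Lambda^*}J_e\eta_e$. $\vec E=(E(\eta,\eta'))_{\eta,\eta'\in\mathcal S_\Lambda}$ is a family of reals with $E(\eta,\eta)=0$ and $E(\eta,\eta'')=E(\eta,\eta')+E(\eta',\eta'')$. Critical set $\mathcal C=\bigcup_{\eta\ne\eta'}\{J_\Lambda:\sum_eJ_e(\eta_e-\eta'_e)=E(\eta,\eta')\}$. For $J_\Lambda\notin\mathcal C$, $\eta\prec\eta'$ iff $E(\eta,\eta')+H_{\Lambda,J}(\eta)-H_{\Lambda,J}(\eta')<0$ (a strict total order); $\sigma(J_\Lambda)$ is the $\prec$-minimal element and $\sigma^{\pm,b}(J_\Lambda)$ the $\prec$-minimal element among $\eta$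 with $\eta_b=\pm1$. The flexibility $F_b(J_\Lambda)=\big|-\sum_{e}J_e(\sigma^{+,b}_e(J_\Lambda)-\sigma^{-,b}_e(J_\Lambda))+E(\sigma^{+,b}(J_\Lambda),\sigma^{-,b}(J_\Lambda))\big|$ on $\mathbb{R}^{\Lambda^*}\setminus\mathcal C$ extends uniquely to a continuous function on $\mathbb{R}^{\Lambda^*}$, still denoted $F_b$. Write $F_b(s)=F_b(J_\Lambda(s))$ and $\sigma(s)=\sigma(J_\Lambda(s))$ (defined when $J_\Lambda(s)\notin\mathcal C$). *)

From HB Require Import structures.
From mathcomp Require Import all_boot all_order all_algebra.
From mathcomp Require Import all_classical all_reals all_analysis.
Set Implicit Arguments. Unset Strict Implicit. Unset Printing Implicit Defensive.
Import Order.TTheory GRing.Theory Num.Theory.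
Local Open Scope ring_scope.

Section Model.
Variables (d : nat) (n : 'I_d -> nat).

(* The finite box Lambda = prod_i {0, ..., n i - 1} in Z^d (up to translation). *)
Definition vertex := {dffun forall i : 'I_d, 'I_(n i)}.

Definition adjacent (x y : vertex) : bool :=
  (\sum_(i < d) (maxn (x i) (y i) - minn (x i) (y i)) == 1)%N.

Definition is_edge (e : {set vertex}) : bool :=
  [exists x, exists y, adjacent x y && (e == [set x; y])].

Definition edge := {e : {set vertex} | is_edge e}.

(* spins: true <-> +1, false <-> -1 *)
Definition sgnb (b : bool) {R : numDomainType} : R := if b then 1 else -1.

(* eta_e = eta_x eta_y : +1 iff the number of -1 spins on e is even *)
Definition edgecfg (eta : {ffun vertex -> bool}) : {ffun edge -> bool} :=
  [ffun e : edge => ~~ odd #|[set x in val e | ~~ eta x]|].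

Definition SLam : {set {ffun edge -> bool}} :=
  [set edgecfg eta | eta : {ffun vertex -> bool}].

Variable R : realType.

Definition Ham (J : edge -> R) (w : {ffun edge -> bool}) : R :=
  - \sum_(e : edge) J e * sgnb (w e).

Definition E_family (E : {ffun edge -> bool} -> {ffun edge -> bool} -> R) :=
  (forall w, w \in SLam -> E w w = 0) /\
  (forall w w' w'', w \in SLam -> w' \in SLam -> w'' \in SLam ->
     E w w'' = E w w' + E w' w'').

Variable E : {ffun edge -> bool} -> {ffun edge -> bool} -> R.

Definition crit (J : edge -> R) : Prop :=
  exists w w', [/\ w \in SLam, w' \in SLam, w != w' &
     \sum_(e : edge) J e * (sgnb (w e) - sgnb (w' e)) = E w w'].

Definition prec (J : edge -> R) (w w' : {ffun edge -> bool}) : bool :=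
  E w w' + Ham J w - Ham J w' < 0.

(* the prec-minimal element of S_Lambda among those satisfying P
   (unique when J is not critical; arbitrary default otherwise) *)
Definition sigma_in (P : pred {ffun edge -> bool}) (J : edge -> R)
  : {ffun edge -> bool} :=
  odflt [ffun=> true]
    [pick w in SLam | P w &&
       [forall w', ((w' \in SLam) && P w' && (w' != w)) ==> prec J w w']].

Definition sigma (J : edge -> R) := sigma_in predT J.
(* sigma^{+,b} (pm = true) and sigma^{-,b} (pm = false) *)
Definition sigma_pm (b : edge) (pm : bool) (J : edge -> R) :=
  sigma_in (fun w => w b == pm) J.

(* the flexibility formula on R^{Lambda*} \ C *)
Definition Fform (b : edge) (J : edge -> R) : R :=
  let sp := sigma_pm b true J in let sm := sigma_pm b false J in
  `| - \sum_(e : edge) J e * (sgnb (sp e) - sgnb (sm e)) + E sp sm |.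

(* its (unique) continuous extension to R^{Lambda*}: the limit of Fform
   at J along non-critical couplings *)
Definition Flex (b : edge) (J : edge -> R) : R :=
  xget 0 [set y : R | forall eps : R, 0 < eps -> exists2 delta : R, 0 < delta &
     forall J' : edge -> R, ~ crit J' ->
       (forall e, `|J' e - J e| < delta) -> `|Fform b J' - y| < eps].

Definition Jcurve (J J' : edge -> R) (s : R) : edge -> R :=
  fun e => expR (- s) * J e + Num.sqrt (1 - expR (- (2 * s))) * J' e.

End Model.

(* Null sets of the product of standard Gaussian measures on R^I (I finite):
   sets of outer measure zero, i.e. coverable by countably many boxes of
   arbitrarily small total Gaussian mass. *)
Definition gauss_null {R : realType} (I : finType) (A : set (I -> R)) : Prop :=
  forall eps : R, 0 < eps -> exists a b : nat -> I -> R,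
    (A `<=` \bigcup_k [set x | forall i, a k i <= x i <= b k i])%classic /\
    (forall N, \sum_(k < N) \prod_(i : I)
        fine (normal_prob 0 1 (`[a k i, b k i])%classic) <= eps).

Definition pairJ {R : Type} {T : Type} (J J' : T -> R) : (T + T)%type -> R :=
  fun i => match i with inl e => J e | inr e => J' e end.

From Pilot Require Import Defs.
From HB Require Import structures.
From mathcomp Require Import all_boot all_order all_algebra.
From mathcomp Require Import all_classical all_reals all_analysis measurable_realfun.
From mathcomp Require Import ring lra zify.
Import Order.TTheory GRing.Theory Num.Theory.
Import numFieldTopology.Exports numFieldNormedType.Exports.
Local Open Scope classical_set_scope.
Local Open Scope ring_scope.
Set Implicit Arguments. Unset Strict Implicit. Unset Printing Implicit Defensive.

(* Since E is a coboundary on S_Lambda, eta < eta' just compares the effective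
   energies Heff J eta = H_J(eta) - E(+, eta), and off the critical set sigma(J)
   is the unique minimiser of Heff J.  Writing gap J for the difference of the
   least energies with eta_b = +1 and with eta_b = -1, we get
   sigma_b(J) = [gap J < 0] and F_b = |gap|: gap is Lipschitz in J, and the
   non-critical couplings are dense (perturbing along the couplings 2^k, which
   separate all configurations, crosses the critical set only finitely often).
   Along the curve gap is continuous and vanishes nowhere while F_b > 0, so by
   the intermediate value theorem its sign, hence sigma_b, is constant.  The
   exceptional set is the critical set in the J coordinates, a finite union of
   hyperplanes; a hyperplane is Gaussian-null, being covered by a grid of boxes
   that are thin in a coordinate with nonzero coefficient. *)

Section NormalProb.
Variable R : realType.
Local Notation P := (@normal_prob R 0 1).
Local Notation peak := (@normal_peak R 1).

Lemma normal_prob_fin (A : set R) : measurable A -> P A \is a fin_num.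
Proof.
move=> mA; rewrite ge0_fin_numE ?measure_ge0 //.
by apply: le_lt_trans (probability_le1 P mA) _; rewrite ltry.
Qed.

Lemma fine_normal_prob_ge0 (A : set R) : 0 <= fine (P A).
Proof. by rewrite fine_ge0 // measure_ge0. Qed.

Lemma normal_prob_itv_le (a b : R) : a <= b ->
  fine (P `[a, b]%classic) <= (b - a) * peak.
Proof.
move=> ab; rewrite -lee_fin fineK ?normal_prob_fin //.
apply: (@le_trans _ _ (\int[lebesgue_measure]_(x in `[a, b]%classic) (cst peak%:E) x))%E.
  apply: ge0_le_integral => //=.
  - by move=> x _; rewrite lee_fin normal_pdf_ge0.
  - by apply/measurable_EFinP; apply: measurable_funS (measurable_normal_pdf 0 1).
  - by move=> x _; rewrite lee_fin normal_pdf_ub ?oner_eq0.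
rewrite integral_cst //= lebesgue_measure_itv /= lte_fin.
case: ltgtP ab => // [ab|->] _; first by rewrite -EFinD -EFinM mulrC.
by rewrite mule0 subrr mul0r.
Qed.

Lemma normal_prob_point (a : R) : P `[a, a]%classic = 0%E.
Proof.
rewrite -[LHS]fineK ?normal_prob_fin //; congr (_%:E).
apply/le_anti; rewrite fine_normal_prob_ge0 andbT.
by rewrite (le_trans (normal_prob_itv_le (lexx a))) // subrr mul0r.
Qed.

Lemma normal_prob_itv_cc_oc (a b : R) : a <= b ->
  fine (P `[a, b]%classic) <= fine (P `]a, b]%classic).
Proof.
move=> ab; rewrite -lee_fin !fineK ?normal_prob_fin //.
apply: (@le_trans _ _ (P (`[a, a] `|` `]a, b])%classic)).
  apply: le_measure; rewrite ?inE //; first exact: measurableU.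
  move=> x /=; rewrite !in_itv /= => /andP[ax ->]; rewrite andbT.
  by case: (ltgtP a x) ax => // _ _; [right | left].
apply: le_trans (measureU2 _ _ _) _ => //.
by rewrite (_ : _ `[a, a]%classic = 0%E) ?add0e //; exact: normal_prob_point.
Qed.

(* The closed cells overlap only in null endpoints; the half-open ones are disjoint. *)
Lemma sum_normal_prob_cells (T : seq int) (h : R) : 0 < h -> uniq T ->
  \sum_(t <- T) fine (P `[t%:~R * h, (t + 1)%:~R * h]%classic) <= 1.
Proof.
move=> h0 uT; pose cell (t : int) := `](t%:~R * h), ((t + 1)%:~R * h)]%classic.
apply: (@le_trans _ _ (\sum_(t <- T) fine (P (cell t)))).
  by apply: ler_sum => t _; apply: normal_prob_itv_cc_oc; rewrite ler_pM2r // ler_int lerDl.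
rewrite -lee_fin -sumEFin (eq_bigr (P \o cell)); last first.
  by move=> t _; rewrite fineK // normal_prob_fin //; exact: measurable_itv.
rewrite (big_nth 0) big_mkord -measure_bigsetU_ord.
- by apply: probability_le1; apply: bigsetU_measurable => i _; exact: measurable_itv.
- by move=> i; exact: measurable_itv.
apply/trivIsetP => i j _ _ ij; apply/seteqP; split => // x [] /=.
rewrite /cell /= !in_itv /= => /andP[li ri] /andP[lj rj].
have := lt_le_trans li rj; have := lt_le_trans lj ri.
rewrite !ltr_pM2r // !ltr_int !ltzD1 => ji ij'.
by move: ij; rewrite -(inj_eq val_inj) -(nth_uniq 0 _ _ uT) ?ltn_ord // eq_le ij' ji.
Qed.

End NormalProb.

Section NonnegSums.
Variable R : numDomainType.

Lemma ler_sum_subset (I : eqType) (s s' : seq I) (F : I -> R) :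
  uniq s -> uniq s' -> {subset s <= s'} -> (forall i, 0 <= F i) ->
  \sum_(i <- s) F i <= \sum_(i <- s') F i.
Proof.
move=> us us' ss' F0.
have -> : \sum_(i <- s) F i = \sum_(i <- s' | i \in s) F i.
  rewrite -[RHS]big_filter; apply: perm_big; apply: uniq_perm; rewrite ?filter_uniq //.
  by move=> i; rewrite mem_filter; case: (boolP (i \in s)) => // /ss' ->.
by rewrite [X in _ <= X](bigID (mem s)) /= lerDl sumr_ge0.
Qed.

Lemma sum_prod_le_prod_sum (X : choiceType) (I : finType) (q : I -> X -> R)
    (S : seq {ffun I -> X}) (T : seq X) :
  (forall i x, 0 <= q i x) -> uniq S -> uniq T ->
  (forall z i, z \in S -> z i \in T) ->
  \sum_(z <- S) \prod_i q i (z i) <= \prod_i \sum_(x <- T) q i x.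
Proof.
move=> q0 uS uT ST; pose Z := seq_sub T.
pose vals (f : {ffun I -> Z}) : {ffun I -> X} := [ffun i => val (f i)].
have vals_inj : injective vals.
  move=> f g /ffunP fg; apply/ffunP => i; apply: val_inj.
  by have := fg i; rewrite !ffunE.
have sumT i : \sum_(x <- T) q i x = \sum_(j : Z) q i (val j).
  rewrite -big_enum -(big_map val predT (q i)); apply/esym/perm_big/uniq_perm => //.
    by rewrite map_inj_uniq ?enum_uniq //; apply: val_inj.
  move=> x; apply/mapP/idP => [[j _ ->]|xT]; first exact: valP.
  by exists (SeqSub xT); rewrite ?mem_enum.
rewrite (eq_bigr _ (fun i _ => sumT i)) bigA_distr_bigA /= -big_enum.
rewrite (eq_bigr (fun f => \prod_i q i (vals f i))); last first.
  by move=> f _; apply: eq_bigr => i _; rewrite ffunE.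
rewrite -(big_map vals predT (fun z => \prod_i q i (z i))).
apply: ler_sum_subset => //.
- by rewrite map_inj_uniq ?enum_uniq.
- move=> z zS; apply/mapP; exists [ffun i => SeqSub (ST z i zS)]; rewrite ?mem_enum //.
  by apply/ffunP => i; rewrite !ffunE.
- by move=> z; apply: prodr_ge0 => i _.
Qed.

End NonnegSums.

Section GaussNull.
Variables (R : realType) (I : finType).
Local Notation P := (@normal_prob R 0 1).
Local Notation peak := (@normal_peak R 1).

Definition box (a b : I -> R) : set (I -> R) := [set x | forall i, a i <= x i <= b i].

Definition box_mass (a b : I -> R) : R := \prod_i fine (P `[a i, b i]%classic).

Lemma gauss_nullE (A : set (I -> R)) : gauss_null A =
  forall eps, 0 < eps -> exists a b : nat -> I -> R,
    A `<=` \bigcup_k box (a k) (b k) /\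
    forall N, \sum_(k < N) box_mass (a k) (b k) <= eps.
Proof. by []. Qed.

Lemma box_mass_ge0 (a b : I -> R) : 0 <= box_mass a b.
Proof. by apply: prodr_ge0 => i _; exact: fine_normal_prob_ge0. Qed.

Lemma box_mass_point (i0 : I) (a : I -> R) : box_mass a a = 0.
Proof. by rewrite /box_mass (bigD1 i0) //= normal_prob_point mul0r. Qed.

Lemma gauss_null_sub (A B : set (I -> R)) :
  A `<=` B -> gauss_null B -> gauss_null A.
Proof. by move=> AB nB eps /nB[a [b [Bab mab]]]; exists a, b; split => // x /AB /Bab. Qed.

Lemma gauss_null_set0 (i0 : I) : gauss_null (set0 : set (I -> R)).
Proof.
rewrite gauss_nullE => eps eps0; exists (fun _ _ => 0), (fun _ _ => 0); split => // N.
by rewrite big1 ?ltW // => k _; exact: (box_mass_point i0).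
Qed.

Lemma gauss_null_countable (Z : countType) (i0 : I) (A : set (I -> R)) :
  (forall eps, 0 < eps -> exists a b : Z -> I -> R,
     A `<=` \bigcup_z box (a z) (b z) /\
     forall s : seq Z, uniq s -> \sum_(z <- s) box_mass (a z) (b z) <= eps) ->
  gauss_null A.
Proof.
rewrite gauss_nullE => nA eps /nA[a [b [Acov mab]]].
pose renum (c : Z -> I -> R) k := oapp c (fun _ => 0) (@pickle_inv Z k).
exists (renum a), (renum b); split.
  by move=> x /Acov[z _ xz]; exists (pickle z) => //; rewrite /renum pickleK_inv.
move=> N; apply: le_trans (mab _ (pmap_uniq (@pickle_invK Z) (iota_uniq 0 N))).
rewrite big_pmap -(big_mkord xpredT (fun k => box_mass (renum a k) (renum b k))).
rewrite /index_iota subn0; apply: ler_sum => k _.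
by rewrite /renum; case: pickle_inv => [z|] /=; rewrite ?lexx // (box_mass_point i0).
Qed.

Lemma gauss_nullU (A B : set (I -> R)) :
  gauss_null A -> gauss_null B -> gauss_null (A `|` B).
Proof.
rewrite !gauss_nullE => nA nB eps eps0; have eps2 : 0 < eps / 2 by rewrite divr_gt0.
have [a1 [b1 [cov1 mass1]]] := nA _ eps2; have [a2 [b2 [cov2 mass2]]] := nB _ eps2.
pose mix (c1 c2 : nat -> I -> R) k := if odd k then c2 k./2 else c1 k./2.
have mix_even c1 c2 k : mix c1 c2 k.*2 = c1 k by rewrite /mix odd_double doubleK.
have mix_odd c1 c2 k : mix c1 c2 k.*2.+1 = c2 k.
  by rewrite /mix /= odd_double uphalf_double.
exists (mix a1 a2), (mix b1 b2); split.
  move=> x [/cov1[k _ xk]|/cov2[k _ xk]]; [exists k.*2 | exists k.*2.+1];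
    by rewrite // ?mix_even ?mix_odd.
move=> N; set F := fun k => box_mass (mix a1 a2 k) (mix b1 b2 k).
apply: (@le_trans _ _ (\sum_(k < N.*2) F k)).
  rewrite -!(big_mkord xpredT F); apply: ler_sum_subset; rewrite ?iota_uniq //.
    move=> k; rewrite !mem_iota !add0n !subn0 => /leq_trans; apply.
    by rewrite -addnn leq_addr.
  by move=> k; exact: box_mass_ge0.
have -> : \sum_(k < N.*2) F k =
    \sum_(k < N) (box_mass (a1 k) (b1 k) + box_mass (a2 k) (b2 k)).
  elim: N => [|N IH]; first by rewrite !big_ord0.
  by rewrite doubleS !big_ord_recr /= IH addrA /F mix_even mix_even mix_odd mix_odd.
by rewrite big_split /= (splitr eps); apply: lerD; [exact: mass1 | exact: mass2].
Qed.

Lemma gauss_null_bigcup (T : finType) (i0 : I) (Q : T -> set (I -> R)) :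
  (forall p, gauss_null (Q p)) -> gauss_null (\bigcup_p Q p).
Proof.
move=> nQ; suff nQs (s : seq T) : gauss_null (\bigcup_(p in [set p | p \in s]) Q p).
  by apply: (gauss_null_sub _ (nQs (enum T))) => x [p _ Qx]; exists p; rewrite /= ?mem_enum.
elim: s => [|p s IH]; first by apply: (gauss_null_sub _ (gauss_null_set0 i0)) => x [].
apply: (gauss_null_sub _ (gauss_nullU (nQ p) IH)) => x [q /=].
by rewrite inE => /orP[/eqP-> Qx|qs Qx]; [left | right; exists q].
Qed.

Section Hyperplane.
Variables (c : I -> R) (i0 : I) (kap h w : R).

Definition grid_center (z : {ffun I -> int}) : R :=
  (kap - \sum_(i | i != i0) c i * ((z i)%:~R * h)) / c i0.

Definition grid_lo (z : {ffun I -> int}) (i : I) : R :=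
  if i == i0 then (if z i0 == 0 then grid_center z - w else 0) else (z i)%:~R * h.

Definition grid_hi (z : {ffun I -> int}) (i : I) : R :=
  if i == i0 then (if z i0 == 0 then grid_center z + w else 0) else (z i + 1)%:~R * h.

Lemma hyperplane_sub_grid : c i0 != 0 -> 0 < h ->
  (\sum_i `|c i|) / `|c i0| * h <= w ->
  [set x | \sum_i c i * x i = kap] `<=` \bigcup_z box (grid_lo z) (grid_hi z).
Proof.
move=> ci0 h0 hw x /= hx.
pose z : {ffun I -> int} := [ffun i => if i == i0 then 0 else Num.floor (x i / h)].
have cellx j : j != i0 -> (z j)%:~R * h <= x j <= (z j + 1)%:~R * h.
  move=> ji0; rewrite /z ffunE (negbTE ji0) -ler_pdivlMr // -[X in _ && X]ler_pdivrMr //.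
  by rewrite floor_le ltW // floorD1_gt.
exists z => // i; rewrite /grid_lo /grid_hi; case: eqVneq => [->|/cellx //].
rewrite ffunE eqxx eqxx -ler_distl.
have -> : x i0 - grid_center z =
    (\sum_(i | i != i0) c i * ((z i)%:~R * h - x i)) / c i0.
  have xi0 : x i0 * c i0 = kap - \sum_(i | i != i0) c i * x i.
    by rewrite -hx (bigD1 i0) //= mulrC addrK.
  apply: (mulIf ci0); rewrite mulrBl !divfK // xi0.
  under [X in _ = X]eq_bigr do rewrite mulrBr.
  rewrite sumrB; lra.
rewrite normrM normfV; apply: le_trans hw.
rewrite mulrAC ler_pM2r ?invr_gt0 ?normr_gt0 //.
apply: le_trans (ler_norm_sum _ _ _) _.
rewrite mulr_suml [X in _ <= X](bigD1 i0) //= -[X in X <= _]add0r.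
apply: lerD; first by rewrite mulr_ge0 ?normr_ge0 ?ltW.
apply: ler_sum => j ji0; rewrite normrM ler_wpM2l //.
have /andP[lo hi] := cellx j ji0.
by rewrite distrC ger0_norm ?subr_ge0 //; rewrite intrD mulrDl mul1r in hi; lra.
Qed.

Lemma sum_box_mass_grid (s : seq {ffun I -> int}) : 0 < h -> 0 <= w -> uniq s ->
  \sum_(z <- s) box_mass (grid_lo z) (grid_hi z) <= 2 * w * peak.
Proof.
move=> h0 w0 us.
pose q i (t : int) : R :=
  if i == i0 then (t == 0)%:R else fine (P `[t%:~R * h, (t + 1)%:~R * h]%classic).
have q0 i t : 0 <= q i t by rewrite /q; case: ifP => _; rewrite ?ler0n ?fine_normal_prob_ge0.
have mass_le z : box_mass (grid_lo z) (grid_hi z) <= 2 * w * peak * \prod_i q i (z i).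
  rewrite /box_mass (bigD1 i0) // [X in _ <= _ * X](bigD1 i0) //= mulrA.
  apply: ler_pM; rewrite ?fine_normal_prob_ge0 ?prodr_ge0 //.
  - by move=> i _; exact: fine_normal_prob_ge0.
  - rewrite /grid_lo /grid_hi /q !eqxx; case: eqP => _; rewrite ?mulr1 ?mulr0.
      apply: le_trans (normal_prob_itv_le _) _; first lra.
      by apply: ler_wpM2r; [exact: normal_peak_ge0 | lra].
    by rewrite normal_prob_point.
  - apply: ler_prod => i ii0.
    by rewrite /grid_lo /grid_hi /q (negbTE ii0) fine_normal_prob_ge0 lexx.
apply: le_trans (ler_sum _ (fun z _ => mass_le z)) _.
rewrite -mulr_sumr ler_piMr ?mulr_ge0 ?normal_peak_ge0 //.
pose T := undup [seq z i | z : {ffun I -> int} <- s, i : I <- enum I].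
apply: le_trans (sum_prod_le_prod_sum q0 us (undup_uniq _) (_ : forall z i, _ -> _ \in T)) _.
  by move=> z i zs; rewrite mem_undup allpairs_f ?mem_enum.
apply: prodr_ile1 => i _; rewrite sumr_ge0 //= /q; case: eqP => _; last first.
  exact: sum_normal_prob_cells (undup_uniq _).
by rewrite -natr_sum lern1 -big_mkcond sum1_count count_uniq_mem ?undup_uniq ?leq_b1.
Qed.

End Hyperplane.

Lemma gauss_null_hyperplane (c : I -> R) (i0 : I) (kap : R) : c i0 != 0 ->
  gauss_null [set x | \sum_i c i * x i = kap].
Proof.
move=> ci0; apply: (gauss_null_countable i0) => eps eps0.
pose C := (\sum_i `|c i|) / `|c i0|.
have C0 : 0 <= C by rewrite divr_ge0 ?sumr_ge0.
have Cpeak0 : 0 <= 2 * C * peak by rewrite mulr_ge0 ?normal_peak_ge0 // mulr_ge0.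
pose h := eps / (2 * C * peak + 1).
have h0 : 0 < h by rewrite divr_gt0 ?ltr_wpDl.
exists (grid_lo c i0 kap h (C * h)), (grid_hi c i0 kap h (C * h)); split.
  exact: hyperplane_sub_grid ci0 h0 (lexx _).
have w0 : 0 <= C * h by apply: mulr_ge0 => //; exact: ltW.
move=> s us; apply: le_trans (sum_box_mass_grid c i0 kap h0 w0 us) _.
rewrite (_ : 2 * (C * h) * peak = 2 * C * peak * h); last by ring.
by rewrite /h mulrA ler_pdivrMr ?ltr_wpDl //; nra.
Qed.

End GaussNull.

Lemma sum_bits_lt (N : nat) (f : 'I_N -> bool) : (\sum_(i < N) f i * 2 ^ i < 2 ^ N)%N.
Proof.
elim: N f => [|N IH] f; first by rewrite big_ord0.
rewrite big_ord_recr /= expnS.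
by have := IH (fun i => f (widen_ord (leqnSn N) i)); case: (f ord_max) => /=; lia.
Qed.

Lemma sum_bits_inj (N : nat) (f g : 'I_N -> bool) :
  (\sum_(i < N) f i * 2 ^ i = \sum_(i < N) g i * 2 ^ i)%N -> f =1 g.
Proof.
elim: N f g => [|N IH] f g; first by move=> _ [].
rewrite !big_ord_recr /= => fg.
have fgN : f ord_max = g ord_max.
  have := sum_bits_lt (fun i => f (widen_ord (leqnSn N) i)).
  have := sum_bits_lt (fun i => g (widen_ord (leqnSn N) i)).
  by move: fg; case: (f ord_max); case: (g ord_max) => //=; lia.
move: fg; rewrite fgN => /addIn /IH fg j; case: (unliftP ord_max j) => [i ->|->] //.
rewrite (_ : lift ord_max i = widen_ord (leqnSn N) i) ?fg //.
by apply: val_inj; rewrite /= /bump leqNgt ltn_ord.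
Qed.

Lemma exists_notin_itv (R : realFieldType) (B : seq R) (del : R) : 0 < del ->
  exists2 t, 0 < t < del & t \notin B.
Proof.
move=> del0; pose m := \big[Num.max/0]_(x <- B | x < del) x.
have m0 : 0 <= m := bigmax_ge_id _ _ _ _.
have mdel : m < del by apply: bigmax_lt.
exists ((m + del) / 2); first by apply/andP; split; lra.
apply/negP => tB; have tdel : (m + del) / 2 < del by lra.
have := le_bigmax_seq 0 _ (fun x => x < del) id tB tdel.
rewrite -/m; lra.
Qed.

Lemma lipschitz_continuous (R : realType) (T : topologicalType) (I : finType)
    (g : (I -> R) -> R) (K : R) (f : T -> I -> R) : 0 <= K ->
  (forall x y r, (forall i, `|y i - x i| <= r) -> `|g y - g x| <= K * r) ->
  (forall i, continuous (fun t => f t i)) -> continuous (fun t => g (f t)).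
Proof.
move=> K0 gK fc t; apply/cvgrPdist_le => eps eps0.
have r0 : 0 < eps / (K + 1) by rewrite divr_gt0 // ltr_wpDl.
have near_f i : \forall s \near t, `|f t i - f s i| <= eps / (K + 1).
  by move/cvgrPdist_le : (fc i t); apply.
apply: (filterS _ (filter_forall _ near_f)) => s fs.
have fs' i : `|f s i - f t i| <= eps / (K + 1) by rewrite distrC fs.
rewrite distrC; apply: le_trans (gK _ _ _ fs') _.
by rewrite mulrA ler_pdivrMr ?ltr_wpDl //; nra.
Qed.

Lemma continuous_nonzero_sign (R : realType) (f : R -> R) (a b : R) : a <= b ->
  {within `[a, b], continuous f} -> (forall x, x \in `[a, b] -> f x != 0) ->
  (f a < 0) = (f b < 0).
Proof.
move=> ab fc fnz.
have noroot : ~ (Num.min (f a) (f b) <= 0 <= Num.max (f a) (f b)).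
  by case/(IVT ab fc) => x /fnz + fx0; rewrite fx0 eqxx.
case: (ltP (f a) 0) => fa; case: (ltP (f b) 0) => fb //; exfalso; apply: noroot.
  by rewrite ge_min le_max (ltW fa) fb orbT.
by rewrite ge_min le_max (ltW fb) fa !orbT.
Qed.

Section Curve.
Variables (R : realType) (d : nat) (n : 'I_d -> nat) (J J' : edge n -> R).

Lemma Jcurve0 : Jcurve J J' 0 = J.
Proof.
apply: funext => e; rewrite /Jcurve oppr0 expR0 mulr0 oppr0 expR0 subrr sqrtr0.
by rewrite mul0r mul1r addr0.
Qed.

Lemma Jcurve_continuous (e : edge n) : continuous (fun s => Jcurve J J' s e).
Proof.
move=> s; apply: cvgD; apply: cvgMr_tmp.
- by apply: continuous_comp; [exact: oppr_continuous | exact: continuous_expR].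
- apply: continuous_comp; last exact: sqrt_continuous.
  apply: cvgB; first exact: cvg_cst.
  apply: continuous_comp; last exact: continuous_expR.
  by apply: cvgN; apply: cvgMl_tmp; apply: cvg_id.
Qed.

End Curve.

Section Hamiltonian.
Variables (R : realType) (d : nat) (n : 'I_d -> nat).
Local Notation cfg := {ffun edge n -> bool}.

Lemma Ham_sub (J : edge n -> R) (w w' : cfg) :
  \sum_e J e * (sgnb (w e) - sgnb (w' e)) = Ham J w' - Ham J w.
Proof. by rewrite /Ham opprK addrC -sumrB; apply: eq_bigr => e _; rewrite mulrBr. Qed.

Lemma Ham_lin (J J' : edge n -> R) (tau : R) (w : cfg) :
  Ham (fun e => J e + tau * J' e) w = Ham J w + tau * Ham J' w.
Proof.
rewrite /Ham mulrN -opprD mulr_sumr -big_split; congr (- _).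
by apply: eq_bigr => e _ /=; rewrite mulrDl mulrA.
Qed.

Definition binary_coupling (e : edge n) : R := (2 ^ enum_rank e)%:R.

Lemma Ham_binary_inj : injective (Ham binary_coupling).
Proof.
have HamE (w : cfg) : Ham binary_coupling w = \sum_e binary_coupling e
    - 2 * (\sum_(i < #|{: edge n}|) w (enum_val i) * 2 ^ i)%:R.
  rewrite (reindex enum_rank) /=; last exact/onW_bij/enum_rank_bij.
  rewrite natr_sum mulr_sumr /Ham -sumrB -sumrN; apply: eq_bigr => e _.
  rewrite enum_rankK natrM /binary_coupling /sgnb.
  by move: (2 ^ _)%:R => u; case: (w e) => /=; lra.
have two0 : (2 : R) != 0 by rewrite pnatr_eq0.
move=> w w'; rewrite !HamE => /addrI /oppr_inj /(mulfI two0) /eqP.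
rewrite eqr_nat => /eqP /sum_bits_inj ww'.
by apply/ffunP => e; rewrite -(enum_rankK e) ww'.
Qed.

End Hamiltonian.

Section Model.
Variables (R : realType) (d : nat) (n : 'I_d -> nat).
Variable E : {ffun edge n -> bool} -> {ffun edge n -> bool} -> R.
Hypothesis HE : E_family E.
Variable b : edge n.
Local Notation cfg := {ffun edge n -> bool}.
Local Notation SL := (SLam n).

Definition plus_cfg : cfg := edgecfg [ffun=> true].

Lemma plus_cfg_in : plus_cfg \in SL.
Proof. by apply/imsetP; exists [ffun=> true]. Qed.

Definition Heff (J : edge n -> R) (w : cfg) : R := Ham J w - E plus_cfg w.

Lemma E_coboundary (w w' : cfg) : w \in SL -> w' \in SL ->
  E w w' = E plus_cfg w' - E plus_cfg w.
Proof.
by case: HE => _ Ecoc wS w'S; rewrite (Ecoc _ _ _ plus_cfg_in wS w'S) addrAC subrr add0r.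
Qed.

Lemma precE (J : edge n -> R) (w w' : cfg) : w \in SL -> w' \in SL ->
  prec E J w w' = (Heff J w < Heff J w').
Proof.
by move=> wS w'S; rewrite /prec E_coboundary // -[RHS]subr_lt0 /Heff; congr (_ < 0); ring.
Qed.

Lemma critE (J : edge n -> R) : crit E J <->
  exists w w', [/\ w \in SL, w' \in SL, w != w' & Heff J w = Heff J w'].
Proof.
have eqE w w' : w \in SL -> w' \in SL ->
    (\sum_e J e * (sgnb (w e) - sgnb (w' e)) = E w w') <-> (Heff J w = Heff J w').
  by move=> wS w'S; rewrite Ham_sub E_coboundary // /Heff; split=> eqH; lra.
by split=> -[w [w' [wS w'S ww' eqH]]]; exists w, w'; split=> //; apply/eqE.
Qed.

Lemma Heff_inj (J : edge n -> R) : ~ crit E J -> {in SL &, injective (Heff J)}.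
Proof.
move=> ncJ w w' wS w'S eqH; apply/eqP; apply: contra_notT ncJ => ww'.
by apply/critE; exists w, w'.
Qed.

Lemma exists_cfg_on_edge (pm : bool) : exists w : cfg, (w \in SL) && (w b == pm).
Proof.
have /existsP[x /existsP[y /andP[xy /eqP bxy]]] := valP b.
case: pm.
  exists plus_cfg; rewrite plus_cfg_in /plus_cfg /edgecfg ffunE.
  rewrite (_ : [set _ in _ | _] = finset.set0)%SET ?cards0 //.
  by apply/setP => v; rewrite !inE ffunE andbF.
have x_neq_y : x != y.
  apply/eqP => exy; move: xy; rewrite exy /Defs.adjacent big1 // => i _.
  by rewrite maxnn minnn subnn.
exists (edgecfg [ffun v => v != x]); apply/andP; split; first by apply/imsetP; eexists.
rewrite /edgecfg ffunE bxy.
rewrite (_ : [set _ in _ | _] = [set x])%SET ?cards1 //.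
apply/setP => v; rewrite !inE ffunE negbK.
by case: eqVneq => [->|]; rewrite ?eqxx ?andbF.
Qed.

Definition anchor (pm : bool) : cfg := xchoose (exists_cfg_on_edge pm).

Lemma anchor_spec (pm : bool) : (anchor pm \in SL) && (anchor pm b == pm).
Proof. exact: (xchooseP (exists_cfg_on_edge pm)). Qed.

Definition argminH (J : edge n -> R) (pm : bool) : cfg :=
  [arg min_(w < anchor pm | (w \in SL) && (w b == pm)) Heff J w]%O.

Definition minH (J : edge n -> R) (pm : bool) : R := Heff J (argminH J pm).

Definition gap (J : edge n -> R) : R := minH J true - minH J false.

Lemma argminH_spec (J : edge n -> R) (pm : bool) :
  [/\ argminH J pm \in SL, argminH J pm b = pm &
      forall w, w \in SL -> w b = pm -> minH J pm <= Heff J w].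
Proof.
rewrite /minH /argminH; case: arg_minP; first exact: anchor_spec.
by move=> w /andP[wS /eqP wb] wmin; split=> // w' w'S w'b; apply: wmin; rewrite w'S w'b eqxx.
Qed.

Lemma sigma_inE (P : pred cfg) (J : edge n -> R) (w0 : cfg) :
  ~ crit E J -> (w0 \in SL) && P w0 ->
  sigma_in E P J = [arg min_(w < w0 | (w \in SL) && P w) Heff J w]%O.
Proof.
move=> ncJ Pw0; case: arg_minP => // m /andP[mS Pm] mmin.
rewrite /sigma_in; case: pickP => [s /and3P[sS Ps /forallP smin]|none] /=.
  apply: contraTeq (smin m) => sm; rewrite mS Pm eq_sym sm /= precE //.
  by rewrite -leNgt mmin // sS.
have /negP[] := none m; rewrite mS Pm /=; apply/forallP => w.
apply/implyP => /andP[/andP[wS Pw] wm]; rewrite precE // lt_neqAle mmin ?wS // andbT.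
by apply: contra wm => /eqP/(Heff_inj ncJ mS wS) ->.
Qed.

Lemma sigma_gap (J : edge n -> R) : ~ crit E J -> sigma E J b = (gap J < 0).
Proof.
move=> ncJ; rewrite /sigma (@sigma_inE _ _ plus_cfg) ?plus_cfg_in //.
case: arg_minP; first by rewrite plus_cfg_in.
move=> g /andP[gS _] gmin; have {}gmin w : w \in SL -> Heff J g <= Heff J w.
  by move=> wS; apply: gmin; rewrite wS.
have min_g : minH J (g b) = Heff J g.
  have [mS _ _] := argminH_spec J (g b).
  by apply/le_anti; rewrite gmin // andbT; have [_ _ ->] := argminH_spec J (g b).
have g_lt : Heff J g < minH J (~~ g b).
  have [mS mb _] := argminH_spec J (~~ g b).
  rewrite lt_neqAle gmin // andbT; apply/eqP => /(Heff_inj ncJ gS mS) gm.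
  by move: mb; rewrite -gm; case: (g b).
rewrite /gap; case: (g b) min_g g_lt => /= -> g_lt; rewrite subr_lt0 //.
by rewrite ltNge ltW.
Qed.

Lemma Fform_gap (J : edge n -> R) : ~ crit E J -> Fform E b J = `|gap J|.
Proof.
move=> ncJ; rewrite /Fform /sigma_pm.
rewrite (@sigma_inE _ _ (anchor true)) ?anchor_spec //.
rewrite (@sigma_inE _ _ (anchor false)) ?anchor_spec //.
have [pS _ _] := argminH_spec J true; have [mS _ _] := argminH_spec J false.
rewrite -/(argminH J true) -/(argminH J false) Ham_sub E_coboundary //.
by rewrite /gap /minH /Heff; congr `|_|; lra.
Qed.

Lemma Heff_lipschitz (J J' : edge n -> R) (r : R) (w : cfg) :
  (forall e, `|J' e - J e| <= r) ->
  `|Heff J' w - Heff J w| <= #|{: edge n}|%:R * r.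
Proof.
move=> JJ'; have -> : Heff J' w - Heff J w = - \sum_e (J' e - J e) * sgnb (w e).
  by rewrite /Heff /Ham; under [in RHS]eq_bigr do rewrite mulrBl; rewrite sumrB; ring.
rewrite normrN; apply: le_trans (ler_norm_sum _ _ _) _.
apply: (@le_trans _ _ (\sum_(e : edge n) r)); last by rewrite sumr_const mulr_natl.
apply: ler_sum => e _; rewrite normrM /sgnb.
by case: (w e); rewrite ?normrN normr1 mulr1.
Qed.

Lemma minH_lipschitz (J J' : edge n -> R) (r : R) (pm : bool) :
  (forall e, `|J' e - J e| <= r) ->
  `|minH J' pm - minH J pm| <= #|{: edge n}|%:R * r.
Proof.
move=> JJ'; have [mS mb mmin] := argminH_spec J pm.
have [m'S m'b m'min] := argminH_spec J' pm.
have := Heff_lipschitz (argminH J pm) JJ'; have := Heff_lipschitz (argminH J' pm) JJ'.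
have := mmin _ m'S m'b; have := m'min _ mS mb.
by rewrite /minH !ler_norml => ? ? /andP[? ?] /andP[? ?]; apply/andP; split; lra.
Qed.

Lemma gap_lipschitz (J J' : edge n -> R) (r : R) :
  (forall e, `|J' e - J e| <= r) ->
  `|gap J' - gap J| <= 2 * #|{: edge n}|%:R * r.
Proof.
move=> JJ'; have := minH_lipschitz true JJ'; have := minH_lipschitz false JJ'.
by rewrite /gap !ler_norml => /andP[? ?] /andP[? ?]; apply/andP; split; lra.
Qed.

Lemma gap_near (J : edge n -> R) (eps : R) : 0 < eps ->
  exists2 delta, 0 < delta & forall J', (forall e, `|J' e - J e| < delta) ->
    `| `|gap J'| - `|gap J| | < eps.
Proof.
move=> eps0; pose K : R := 2 * #|{: edge n}|%:R.
have K1 : 0 < K + 1 by rewrite ltr_wpDl ?mulr_ge0.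
exists (eps / (K + 1)); first by rewrite divr_gt0.
move=> J' JJ'; apply: le_lt_trans (ler_dist_dist _ _) _.
apply: le_lt_trans (gap_lipschitz (fun e => ltW (JJ' e))) _.
by rewrite -/K mulrA ltr_pdivrMr //; nra.
Qed.

Lemma noncrit_dense (J : edge n -> R) (del : R) : 0 < del ->
  exists J' : edge n -> R, ~ crit E J' /\ forall e, `|J' e - J e| < del.
Proof.
move=> del0; have [u u0 u_inj] : exists2 u : edge n -> R,
    (forall e, 0 <= u e) & injective (Ham u).
  by exists (@binary_coupling R _ n) => [e|]; [exact: ler0n | exact: Ham_binary_inj].
pose M := \sum_e u e.
have uM e : u e <= M by rewrite /M (bigD1 e) //= lerDl sumr_ge0.
pose B := [seq (Heff J w' - Heff J w) / (Ham u w - Ham u w') | w <- enum SL, w' <- enum SL].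
have M1 : 0 < M + 1 by rewrite ltr_wpDl ?sumr_ge0.
have [tau /andP[tau0 tau_del] tauB] := exists_notin_itv B (divr_gt0 del0 M1).
exists (fun e => J e + tau * u e); split.
  move/critE => [w [w' [wS w'S ww']]]; rewrite /Heff !Ham_lin => eqH.
  have Hu : Ham u w - Ham u w' != 0 by rewrite subr_eq0 (inj_eq u_inj).
  move/negP: tauB; apply; apply/allpairsP; exists (w, w'); rewrite !mem_enum.
  by split=> //=; apply: (mulIf Hu); rewrite divfK // /Heff; lra.
move=> e; rewrite addrC addKr ger0_norm; last by rewrite mulr_ge0 ?u0 ?ltW.
rewrite ltr_pdivlMr // in tau_del; have := ler_wpM2l (ltW tau0) (uM e); nra.
Qed.

Lemma Flex_gap (J : edge n -> R) : Flex E b J = `|gap J|.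
Proof.
apply: xget_unique => [eps /(gap_near J)[delta delta0 near_gap]|y Ly].
  by exists delta => // J' ncJ' /near_gap; rewrite Fform_gap.
apply/eqP/negPn/negP => y_neq; pose eps := `|y - `|gap J| | / 2.
have eps0 : 0 < eps by rewrite divr_gt0 // normr_gt0 subr_eq0.
have [d1 d10 near_y] := Ly eps eps0; have [d2 d20 near_gap] := gap_near J eps0.
have [J' [ncJ' JJ']] : exists J', ~ crit E J' /\ forall e, `|J' e - J e| < Num.min d1 d2.
  by apply: noncrit_dense; rewrite lt_min d10 d20.
have lt_d1 e : `|J' e - J e| < d1 by move: (JJ' e); rewrite lt_min => /andP[].
have lt_d2 e : `|J' e - J e| < d2 by move: (JJ' e); rewrite lt_min => /andP[].
have := near_y J' ncJ' lt_d1; have := near_gap J' lt_d2.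
rewrite Fform_gap // => h1 h2; have := ler_distD `|gap J'| y `|gap J|.
by rewrite distrC in h2; rewrite /eps in h1 h2; lra.
Qed.

Lemma gap_curve_continuous (J J' : edge n -> R) :
  continuous (fun s => gap (Jcurve J J' s)).
Proof.
apply: (@lipschitz_continuous _ _ _ gap (2 * #|{: edge n}|%:R)).
- by rewrite mulr_ge0.
- by move=> x y r; exact: gap_lipschitz.
- exact: Jcurve_continuous.
Qed.

Lemma sigma_curve (J J' : edge n -> R) (t : R) : ~ crit E J ->
  (forall s, 0 <= s <= t -> 0 < Flex E b (Jcurve J J' s)) ->
  forall s, 0 <= s <= t -> ~ crit E (Jcurve J J' s) ->
    sigma E (Jcurve J J' s) b = sigma E J b.
Proof.
move=> ncJ Fpos s /andP[s0 st] ncs; rewrite !sigma_gap // -{2}(Jcurve0 J J').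
apply/esym/(@continuous_nonzero_sign _ (fun s => gap (Jcurve J J' s)) _ _ s0).
  exact/continuous_subspaceT/gap_curve_continuous.
move=> x; rewrite in_itv /= => /andP[x0 xs].
by rewrite -normr_gt0 -Flex_gap Fpos // x0 (le_trans xs st).
Qed.

Lemma crit_gauss_null :
  gauss_null [set x : edge n + edge n -> R | crit E (fun e => x (inl e))].
Proof.
pose Q (p : cfg * cfg) := [set x : edge n + edge n -> R |
  [/\ p.1 \in SL, p.2 \in SL, p.1 != p.2 &
      \sum_e x (inl e) * (sgnb (p.1 e) - sgnb (p.2 e)) = E p.1 p.2]].
apply: (gauss_null_sub _ (@gauss_null_bigcup _ _ _ (inl b) Q _)).
  by move=> x [w [w' Qx]]; exists (w, w').
move=> [w w']; have [<-|ww'] := eqVneq w w'.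
  by apply: (gauss_null_sub _ (gauss_null_set0 (inl b))) => x [_ _ /eqP].
have [e we] : exists e, w e != w' e.
  apply/existsP; apply: contraNT ww' => /negP noe; apply/eqP/ffunP => e.
  by apply/eqP/negPn/negP => we; apply: noe; apply/existsP; exists e.
pose c := pairJ (fun e => sgnb (w e) - sgnb (w' e)) (fun=> 0 : R).
have ce : c (inl e) != 0.
  by rewrite /c /pairJ /sgnb; move: we; case: (w e); case: (w' e) => //= _; apply/eqP; lra.
apply: (gauss_null_sub _ (gauss_null_hyperplane (E w w') ce)) => x [_ _ _ <-] /=.
rewrite big_sumType /= [X in _ + X]big1 ?addr0 => [|i _]; last by rewrite mul0r.
by apply: eq_bigr => i _; rewrite mulrC.
Qed.

End Model.

Theorem proposition2p9 (R : realType) (d : nat) (n : 'I_d -> nat)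
  (E : {ffun edge n -> bool} -> {ffun edge n -> bool} -> R)
  (HE : E_family E) (b : edge n) :
  exists N : set (edge n + edge n -> R), gauss_null N /\
  forall J J' : edge n -> R, ~ N (pairJ J J') ->
    ~ crit E J /\
    forall t : R, 0 <= t ->
      (forall s : R, 0 <= s <= t -> 0 < Flex E b (Jcurve J J' s)) ->
      forall s : R, 0 <= s <= t -> ~ crit E (Jcurve J J' s) ->
        sigma E (Jcurve J J' s) b = sigma E J b.
Proof.
exists [set x | crit E (fun e => x (inl e))]; split; first exact: crit_gauss_null E b.
by move=> J J' ncJ; split=> // t _; exact: sigma_curve.
Qed.
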